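(* Let $k\ge 2$, $w=2^k-1$, $v=2^{k-1}$. Consider a line of $w$ cells indexed $0,\dots,w-1$, all empty except the middle cell $v-1$, on which the frog stands. For $j\ge1$ let $\tilde U_j$ be the sequence of jump lengths consisting of $2^j-1$ jumps of length $1$ followed by one jump of length $2^j+2^{j-1}-1$. Consider the fixed sequence $\tilde U_{k-1},\tilde U_{k-2},\dots,\tilde U_2,\tilde U_1$. Then every valid execution of this sequence visits every cell of the line exactly once and ends on a cell with even index, and for every even index $p\in\{0,2,\dots,w-1\}$ there is a valid execution ending on cell $p$.
   Context: A frog on a line of cells performs a given sequence of positive jump lengths; for each jump it chooses a direction, moving from position $q$ to $q+J$ or $q-J$. An execution is valid if every landing cell lies on the line, is not blocked, and has not been visited before (the starting cell counts as visited). Cells are indexed from $0$. *)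

From Stdlib Require Import ZArith List Arith.
Import ListNotations.
Open Scope Z_scope.

Definition Utilde (j : nat) : list nat :=
  repeat 1%nat (2 ^ j - 1)%nat ++ [ (2 ^ j + 2 ^ (j - 1) - 1)%nat ].

Definition frog_jumps (k : nat) : list nat :=
  flat_map Utilde (rev (seq 1 (k - 1))).

Fixpoint landings (q : Z) (J : list nat) (ds : list bool) : list Z :=
  match J, ds with
  | j :: J', d :: ds' =>
      let q' := if d then q + Z.of_nat j else q - Z.of_nat j in
      q' :: landings q' J' ds'
  | _, _ => []
  end.

Definition visited (q : Z) (J : list nat) (ds : list bool) : list Z :=
  q :: landings q J ds.

Definition final_cell (q : Z) (J : list nat) (ds : list bool) : Z :=
  last (visited q J ds) q.

Definition valid_exec (w : Z) (blocked : Z -> Prop) (q : Z)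
    (J : list nat) (ds : list bool) : Prop :=
  length ds = length J /\
  (forall c, In c (landings q J ds) -> 0 <= c < w /\ ~ blocked c) /\
  NoDup (visited q J ds).

(* Track an execution by the set [E] of cells it may still land on, removing each
   cell as it is used.  On the block of cells at distance < 2g from a centre c
   (centre excluded), the 2g-1 unit jumps of a block of the jump sequence must all
   go the same way, since the cell behind the frog is used up; they reach the end
   of the block, and the jump of length 3g-1 must go back, to the centre of the
   opposite half, which is a block of half-width g around c -/+ g.  By induction
   the reachable final cells of the whole sequence are exactly the cells x of the
   block with x - c + g - 1 even, and counting cells shows that every valid
   execution covers the line. *)

From Stdlib Require Import ZArith List Arith Lia.
Import ListNotations.
Open Scope Z_scope.

Definition step (q : Z) (j : nat) (d : bool) : Z :=
  if d then q + Z.of_nat j else q - Z.of_nat j.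

Fixpoint exec_in (E : Z -> Prop) (q : Z) (J : list nat) (ds : list bool) : Prop :=
  match J, ds with
  | [], [] => True
  | j :: J', d :: ds' =>
      E (step q j d) /\ exec_in (fun c => E c /\ c <> step q j d) (step q j d) J' ds'
  | _, _ => False
  end.

Fixpoint exec_end (q : Z) (J : list nat) (ds : list bool) : Z :=
  match J, ds with
  | j :: J', d :: ds' => exec_end (step q j d) J' ds'
  | _, _ => q
  end.

Lemma exec_in_ext J ds E E' q :
  (forall c, E c <-> E' c) -> exec_in E q J ds -> exec_in E' q J ds.
Proof.
  revert ds E E' q; induction J as [|j J IH]; intros [|d ds] E E' q HE; cbn; auto.
  intros [Hin Hex]; split; [now apply HE|].
  apply (IH _ _ _ _ (fun c => and_iff_compat_r _ (HE c)) Hex).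
Qed.

Lemma exec_in_iff J ds E q :
  exec_in E q J ds <->
  length ds = length J /\ (forall c, In c (landings q J ds) -> E c) /\
  NoDup (landings q J ds).
Proof.
  revert ds E q; induction J as [|j J IH]; intros [|d ds] E q; cbn.
  - split; [|easy]. intros _; repeat split; [easy|constructor].
  - split; [easy|]. now intros [].
  - split; [easy|]. now intros [].
  - rewrite IH. fold (step q j d). split.
    + intros (Hin & Hlen & Hall & Hnd). repeat split.
      * now f_equal.
      * intros y [<-|Hy]; [easy|]. now apply Hall.
      * constructor; [|easy]. intros Hq. now apply Hall in Hq.
    + intros (Hlen & Hall & Hnd). apply NoDup_cons_iff in Hnd as [Hq Hnd].
      split; [auto|]. split; [lia|]. split; [|easy].
      intros y Hy. split; [auto|]. intros ->. auto.
Qed.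

Lemma valid_exec_iff_exec_in w blocked q J ds :
  valid_exec w blocked q J ds <->
  exec_in (fun c => (0 <= c < w /\ ~ blocked c) /\ c <> q) q J ds.
Proof.
  unfold valid_exec, visited. rewrite exec_in_iff, NoDup_cons_iff. split.
  - intros (Hlen & Hall & Hq & Hnd). split; [easy|]. split; [|easy].
    intros c Hc. split; [auto|]. intros ->. auto.
  - intros (Hlen & Hall & Hnd). split; [easy|]. split; [|split; [|easy]].
    + intros c Hc. apply Hall, Hc.
    + intros Hq. now apply Hall in Hq.
Qed.

Lemma exec_end_last q J ds d : exec_end q J ds = last (visited q J ds) d.
Proof.
  unfold visited.
  revert ds q; induction J as [|j J IH]; intros [|d' ds] q; cbn; auto.
Qed.

Lemma exec_end_final_cell q J ds : exec_end q J ds = final_cell q J ds.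
Proof. apply exec_end_last. Qed.

Lemma length_landings q J ds :
  length ds = length J -> length (landings q J ds) = length J.
Proof.
  revert ds q; induction J as [|j J IH]; intros [|d ds] q Hlen; cbn in *; auto.
Qed.

Definition run_cells (q : Z) (n : nat) (d : bool) (c : Z) : Prop :=
  0 < (if d then c - q else q - c) <= Z.of_nat n.

Definition block (c : Z) (g : nat) (x : Z) : Prop :=
  Z.abs (x - c) < Z.of_nat g /\ x <> c.

Ltac by_direction d :=
  destruct d; unfold block, run_cells, step; cbn [negb]; intuition lia.

Lemma step_unit_back q d : step (step q 1 d) 1 (negb d) = q.
Proof. by_direction d. Qed.

Lemma unit_run_forced m E q rest d ds :
  ~ E q -> exec_in E q (repeat 1%nat (S m) ++ rest) (d :: ds) ->
  exists ds', ds = repeat d m ++ ds' /\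
    exec_in (fun c => E c /\ ~ run_cells q (S m) d c) (step q (S m) d) rest ds'.
Proof.
  revert E q ds; induction m as [|m IH]; intros E q ds Hq [Hin Hex].
  - exists ds. split; [easy|]. revert Hex; apply exec_in_ext.
    intros c; by_direction d.
  - destruct ds as [|d' ds]; [destruct rest; contradiction|].
    assert (d' = d) as ->.
    { destruct Hex as [[Hback _] _]. destruct (Bool.bool_dec d' d) as [|Hd]; [easy|].
      replace d' with (negb d) in Hback by now destruct d, d'.
      now rewrite step_unit_back in Hback. }
    destruct (IH _ _ _ (fun H => proj2 H eq_refl) Hex) as (ds' & -> & Hex').
    exists ds'. split; [easy|].
    replace (step q (S (S m)) d) with (step (step q 1 d) (S m) d)
      by by_direction d.
    revert Hex'; apply exec_in_ext. intros c; by_direction d.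
Qed.

Lemma exec_in_unit_run m E q rest d ds :
  (forall c, run_cells q m d c -> E c) ->
  exec_in (fun c => E c /\ ~ run_cells q m d c) (step q m d) rest ds ->
  exec_in E q (repeat 1%nat m ++ rest) (repeat d m ++ ds).
Proof.
  revert E q; induction m as [|m IH]; intros E q Hrun Hex.
  - replace (step q 0 d) with q in Hex by by_direction d.
    revert Hex; apply exec_in_ext. intros c; by_direction d.
  - split.
    + apply Hrun. by_direction d.
    + apply IH.
      * intros c Hc. split.
        -- apply Hrun. revert Hc; by_direction d.
        -- revert Hc; by_direction d.
      * replace (step (step q 1 d) m d) with (step q (S m) d)
          by by_direction d.
        revert Hex; apply exec_in_ext.
        intros c; by_direction d.
Qed.

Lemma exec_end_unit_run m q rest d ds :
  exec_end q (repeat 1%nat m ++ rest) (repeat d m ++ ds) = exec_end (step q m d) rest ds.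
Proof.
  revert q; induction m as [|m IH]; intros q; cbn [repeat app exec_end].
  - f_equal. by_direction d.
  - rewrite IH. f_equal. by_direction d.
Qed.

Definition reachable (c : Z) (g : nat) (J : list nat) (x : Z) : Prop :=
  exists ds, exec_in (block c g) c J ds /\ exec_end c J ds = x.

Lemma reachable_nil c g x : reachable c g [] x <-> x = c.
Proof.
  split.
  - now intros ([|d ds] & Hex & <-).
  - intros ->. now exists [].
Qed.

Lemma reachable_double_block (g : nat) c rest x : (1 <= g)%nat ->
  reachable c (2 * g) (repeat 1%nat (2 * g - 1) ++ (3 * g - 1)%nat :: rest) x <->
  exists d, reachable (step c g d) g rest x.
Proof.
  intros Hg. replace (2 * g - 1)%nat with (S (2 * g - 2)) by lia. split.
  - intros ([|d ds] & Hex & Hend); [contradiction|].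
    destruct (unit_run_forced _ _ _ _ _ _ (fun H => proj2 H eq_refl) Hex)
      as (ds' & -> & Hex').
    destruct ds' as [|d2 ds2]; [contradiction|].
    destruct Hex' as [Hland Hrest].
    assert (d2 = negb d) as ->.
    { destruct d2; revert Hland; by_direction d. }
    exists (negb d), ds2. split.
    + replace (step c g (negb d))
        with (step (step c (S (2 * g - 2)) d) (3 * g - 1) (negb d))
        by by_direction d.
      revert Hrest; apply exec_in_ext.
      intros y; by_direction d.
    + rewrite <- Hend. change (d :: repeat d (2 * g - 2) ++ negb d :: ds2)
        with (repeat d (S (2 * g - 2)) ++ negb d :: ds2).
      rewrite exec_end_unit_run. cbn. f_equal.
      by_direction d.
  - intros (d & ds & Hex & Hend).
    exists (repeat (negb d) (S (2 * g - 2)) ++ d :: ds). split.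
    + apply exec_in_unit_run.
      * intros y; by_direction d.
      * split.
        -- by_direction d.
        -- replace (step (step c (S (2 * g - 2)) (negb d)) (3 * g - 1) d)
             with (step c g d) by by_direction d.
           revert Hex; apply exec_in_ext.
           intros y; by_direction d.
    + rewrite exec_end_unit_run. cbn. rewrite <- Hend. f_equal.
      by_direction d.
Qed.

Lemma Utilde_succ m :
  Utilde (S m) = repeat 1%nat (2 * 2 ^ m - 1) ++ [(3 * 2 ^ m - 1)%nat].
Proof.
  unfold Utilde. rewrite Nat.pow_succ_r'. cbn [Nat.sub]. rewrite Nat.sub_0_r.
  do 3 f_equal. lia.
Qed.

Lemma frog_jumps_succ m : frog_jumps (S (S m)) = Utilde (S m) ++ frog_jumps (S m).
Proof.
  unfold frog_jumps. cbn [Nat.sub]. rewrite Nat.sub_0_r, seq_S, rev_app_distr.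
  reflexivity.
Qed.

Lemma length_frog_jumps m : length (frog_jumps (S m)) = (2 ^ S m - 2)%nat.
Proof.
  induction m as [|m IH]; [reflexivity|].
  rewrite frog_jumps_succ, length_app, IH, Utilde_succ, length_app, repeat_length.
  cbn [length]. rewrite !Nat.pow_succ_r'.
  pose proof (Nat.pow_nonzero 2 m ltac:(lia)). lia.
Qed.

Lemma reachable_frog_jumps m c x :
  reachable c (2 ^ m) (frog_jumps (S m)) x <->
  Z.abs (x - c) < Z.of_nat (2 ^ m) /\ (x - c + Z.of_nat (2 ^ m) - 1) mod 2 = 0.
Proof.
  revert c; induction m as [|m IH]; intros c.
  - change (frog_jumps 1) with (@nil nat). rewrite reachable_nil.
    cbn. Z.div_mod_to_equations. lia.
  - pose proof (Nat.pow_nonzero 2 m ltac:(lia)).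
    rewrite frog_jumps_succ, Utilde_succ, <- app_assoc, Nat.pow_succ_r'; cbn [app].
    rewrite reachable_double_block by lia.
    setoid_rewrite IH. split.
    + intros (d & Hx & Hpar). unfold step in *.
      destruct d; Z.div_mod_to_equations; lia.
    + intros [Hx Hpar]. destruct (Z_lt_le_dec c x); [exists true | exists false];
        unfold step; Z.div_mod_to_equations; lia.
Qed.

Lemma final_cells_frog_jumps m x :
  let v := Z.of_nat (2 ^ m) in
  (exists ds, valid_exec (2 * v - 1) (fun _ => False) (v - 1) (frog_jumps (S m)) ds /\
              final_cell (v - 1) (frog_jumps (S m)) ds = x) <->
  0 <= x < 2 * v - 1 /\ Z.even x = true.
Proof.
  intros v. transitivity (reachable (v - 1) (2 ^ m) (frog_jumps (S m)) x).
  - unfold reachable. setoid_rewrite valid_exec_iff_exec_in.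
    setoid_rewrite <- exec_end_final_cell.
    split; intros (ds & Hex & Hend); exists ds; split; auto;
      revert Hex; apply exec_in_ext; intros c; unfold block; lia.
  - rewrite reachable_frog_jumps, Zmod_even. fold v.
    replace (x - (v - 1) + v - 1) with x by ring.
    destruct (Z.even x); intuition (try lia; try discriminate).
Qed.

Lemma NoDup_range_count_occ (l : list Z) (n : Z) :
  NoDup l -> (forall x, In x l -> 0 <= x < n) -> length l = Z.to_nat n ->
  forall c, 0 <= c < n -> count_occ Z.eq_dec l c = 1%nat.
Proof.
  intros Hnd Hrange Hlen c Hc.
  set (R := map Z.of_nat (seq 0 (Z.to_nat n))).
  assert (HinR : forall x, 0 <= x < n -> In x R).
  { intros x Hx. apply in_map_iff. exists (Z.to_nat x). rewrite in_seq. lia. }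
  assert (Hcover : incl R l).
  { apply NoDup_length_incl; [easy| |].
    - unfold R. rewrite length_map, length_seq. lia.
    - intros x Hx. apply HinR, Hrange, Hx. }
  now apply (NoDup_count_occ' Z.eq_dec l), Hcover, HinR.
Qed.

Lemma valid_exec_count_occ w blocked q J ds :
  S (length J) = Z.to_nat w -> 0 <= q < w -> valid_exec w blocked q J ds ->
  forall c, 0 <= c < w -> count_occ Z.eq_dec (visited q J ds) c = 1%nat.
Proof.
  intros Hlen Hq (Hds & Hall & Hnd). apply NoDup_range_count_occ; [easy| |].
  - intros x [<-|Hx]; [easy|]. now apply Hall.
  - unfold visited; cbn [length]. now rewrite length_landings.
Qed.

Theorem mainTheorem7 (k : nat) (hk : (2 <= k)%nat) :
  let w := 2 ^ Z.of_nat k - 1 in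
  let v := 2 ^ (Z.of_nat k - 1) in
  let noblock := fun _ : Z => False in
  (forall ds : list bool,
     valid_exec w noblock (v - 1) (frog_jumps k) ds ->
     (forall c, 0 <= c < w ->
        count_occ Z.eq_dec (visited (v - 1) (frog_jumps k) ds) c = 1%nat) /\
     Z.even (final_cell (v - 1) (frog_jumps k) ds) = true) /\
  (forall p, 0 <= p < w -> Z.even p = true ->
     exists ds : list bool,
       valid_exec w noblock (v - 1) (frog_jumps k) ds /\
       final_cell (v - 1) (frog_jumps k) ds = p).
Proof.
  destruct k as [|m]; [lia|]. intros w v noblock.
  pose proof (Nat.pow_nonzero 2 m ltac:(lia)).
  assert (Hw : w = 2 * Z.of_nat (2 ^ m) - 1)
    by (unfold w; rewrite Nat2Z.inj_succ, Z.pow_succ_r, Nat2Z.inj_pow; lia).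
  assert (Hv : v = Z.of_nat (2 ^ m))
    by (unfold v; rewrite Nat2Z.inj_pow; f_equal; lia).
  rewrite Hw, Hv. split.
  - intros ds Hval. split.
    + apply (valid_exec_count_occ _ noblock); [|lia|easy].
      rewrite length_frog_jumps, Nat.pow_succ_r'. lia.
    + apply (final_cells_frog_jumps m). now exists ds.
  - intros p Hp Hev. now apply final_cells_frog_jumps.
Qed.
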